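(* Let $N\ge1$, $\mathbf{h}_s,\mathbf{h}_0\in\mathbb{C}^N$, $\sigma>0$, $\epsilon>0$, $\bar P>0$, $P_t>0$, and let $\mathcal{B}=\{\mathbf{h}\in\mathbb{C}^N:\|\mathbf{h}-\mathbf{h}_0\|^2\le\epsilon\sigma^2\}$. Consider the mean feedback problem $$\mathbf{P3}:\ \max_{p\ge0,\ \|\mathbf{v}\|=1}\log\big(1+p\,\mathbf{h}_s^H\mathbf{v}\mathbf{v}^H\mathbf{h}_s\big)\ \text{ s.t. } p\le\bar P,\ \ p\,\mathbf{h}^H\mathbf{v}\mathbf{v}^H\mathbf{h}\le P_t\ \forall\mathbf{h}\in\mathcal{B},$$ and its two subproblems $\mathbf{SP1}$ (same objective, only the constraint $p\le\bar P$) and $\mathbf{SP2}$ (same objective, only the constraints $p\,\mathbf{h}^H\mathbf{v}\mathbf{v}^H\mathbf{h}\le P_t$ for all $\mathbf{h}\in\mathcal{B}$). Identify a feasible pair $(p,\mathbf{v})$ with $\mathbf{S}=p\mathbf{v}\mathbf{v}^H$. Let $\mathbf{S}_1$ be the optimal solution of $\mathbf{SP1}$ and $\mathbf{S}_2$ the optimal solution of $\mathbf{SP2}$. Then: (i) if $\mathbf{S}_1$ satisfies the constraint of $\mathbf{SP2}$, then $\mathbf{S}_1$ is the optimal solution of $\mathbf{P3}$; (ii) if $\mathbf{S}_2$ satisfies the constraint of $\mathbf{SP1}$, i.e. $\mathrm{tr}(\mathbf{S}_2)\le\bar P$, then $\mathbf{S}_2$ is the optimal solution of $\mathbf{P3}$;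 (iii) otherwise, the optimal solution $\mathbf{S}$ of $\mathbf{P3}$ satisfies both $\mathrm{tr}(\mathbf{S})=\bar P$ and $\mathbf{h}_{\mathrm{opt}}^H\mathbf{S}\mathbf{h}_{\mathrm{opt}}=P_t$, where $\mathbf{h}_{\mathrm{opt}}=\arg\max_{\mathbf{h}\in\mathcal{B}}\mathbf{h}^H\mathbf{S}\mathbf{h}$.
   Context: $\mathbf{P3}$ is the special case of the robust cognitive beamforming problem in which the channel-uncertainty covariance is $\sigma^2\mathbf{I}$ (mean feedback), so the uncertainty set is a Euclidean ball of radius $\sqrt{\epsilon}\sigma$ around $\mathbf{h}_0$. *)

From mathcomp Require Import all_boot all_algebra.
From mathcomp Require Import complex.
From mathcomp Require Import reals exp.
Import GRing.Theory Num.Theory.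
Set Implicit Arguments. Unset Strict Implicit. Unset Printing Implicit Defensive.
Local Open Scope ring_scope.
Local Open Scope complex_scope.

Section P3Defs.
Variables (R : realType) (N : nat).
Local Notation C := R[i].

Definition ctmx m n (A : 'M[C]_(m, n)) : 'M[C]_(n, m) := (map_mx conjc A)^T.

Definition vnorm2 (v : 'cV[C]_N) : C := \sum_i `|v i 0| ^+ 2.

Definition qform (h : 'cV[C]_N) (S : 'M[C]_N) : C := (ctmx h *m S *m h) 0 0.

Definition is_pvv (S : 'M[C]_N) (p : R) (v : 'cV[C]_N) : Prop :=
  0 <= p /\ vnorm2 v = 1 /\ S = p%:C *: (v *m ctmx v).

Definition in_ball (h0 : 'cV[C]_N) (eps sigma : R) (h : 'cV[C]_N) : Prop :=
  vnorm2 (h - h0) <= (eps * sigma ^+ 2)%:C.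

Definition interf_ok (h0 : 'cV[C]_N) (eps sigma Pt : R) (S : 'M[C]_N) : Prop :=
  forall h, in_ball h0 eps sigma h -> qform h S <= Pt%:C.

Definition feas_SP1 (Pbar : R) (S : 'M[C]_N) : Prop :=
  exists p v, is_pvv S p v /\ p <= Pbar.
Definition feas_SP2 (h0 : 'cV[C]_N) (eps sigma Pt : R) (S : 'M[C]_N) : Prop :=
  exists p v, is_pvv S p v /\ interf_ok h0 eps sigma Pt S.
Definition feas_P3 (h0 : 'cV[C]_N) (eps sigma Pbar Pt : R) (S : 'M[C]_N) : Prop :=
  exists p v, is_pvv S p v /\ p <= Pbar /\ interf_ok h0 eps sigma Pt S.

Definition objective (hs : 'cV[C]_N) (S : 'M[C]_N) : R :=
  ln (1 + complex.Re (qform hs S)).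

Definition optimal (feas : 'M[C]_N -> Prop) (hs : 'cV[C]_N) (S : 'M[C]_N) : Prop :=
  feas S /\ forall S', feas S' -> objective hs S' <= objective hs S.

Definition the_optimal (feas : 'M[C]_N -> Prop) (hs : 'cV[C]_N) (S : 'M[C]_N) : Prop :=
  optimal feas hs S /\ forall S', optimal feas hs S' -> S' = S.

End P3Defs.

From mathcomp Require Import all_boot all_order all_algebra.
From mathcomp Require Import complex.
From mathcomp Require Import reals exp.
From mathcomp Require Import ring lra.
Import Order.TTheory GRing.Theory Num.Theory ComplexField.Normc.
Set Implicit Arguments. Unset Strict Implicit. Unset Printing Implicit Defensive.
Local Open Scope ring_scope.
Local Open Scope complex_scope.

(* Write a feasible S = p v v^H as u u^H with u = sqrt p v.  Then tr S = ||u||^2,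
   h^H S h = |<h, u>|^2 and the objective increases with |<hs, u>|.  By
   Cauchy-Schwarz the robust constraint becomes |<h0, u>| + sqrt(eps) sigma ||u||
   <= sqrt Pt, the worst h being h0 moved along u in phase with <h0, u>.
   Parts (i) and (ii) hold because the unique optimum of a relaxation that is
   feasible for P3 is the unique optimum of P3.  For (iii), uniqueness makes an
   optimum u of P3 strictly worse than the optima u1, u2 of SP1 and SP2.  Both
   constraints are convex along the segment from u to any w, once w is rotated
   so that <hs, w> is in phase with <hs, u>, and the objective then increases
   along it; so if the power (resp. interference) constraint were slack at u, a
   small step towards u2 (resp. u1) would stay feasible and do better. *)

Lemma sum_CauchySchwarz (R : realDomainType) (I : finType) (a b : I -> R) :
  (\sum_i a i * b i) ^+ 2 <= (\sum_i a i ^+ 2) * (\sum_i b i ^+ 2).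
Proof.
set A := \sum_i a i ^+ 2; set B := \sum_i b i ^+ 2; set P := \sum_i a i * b i.
have A_ge0 : 0 <= A by apply: sumr_ge0 => i _; exact: sqr_ge0.
have sum_sqr : \sum_i (P * a i - A * b i) ^+ 2 = A * (A * B - P ^+ 2).
  rewrite (eq_bigr (fun i => P ^+ 2 * a i ^+ 2 - (2 * P * A) * (a i * b i)
                              + A ^+ 2 * b i ^+ 2)); last by move=> i _; ring.
  by rewrite big_split /= sumrB -!mulr_sumr -/A -/B -/P; ring.
have : 0 <= A * (A * B - P ^+ 2).
  by rewrite -sum_sqr; apply: sumr_ge0 => i _; exact: sqr_ge0.
have [A0 _|A_neq0] := eqVneq A 0; last first.
  by rewrite pmulr_rge0 ?subr_ge0 // lt0r A_neq0.
have a0 i : a i = 0.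
  apply/eqP; rewrite -sqrf_eq0; apply/eqP.
  by apply: (psumr_eq0P (P := xpredT) (F := fun i => a i ^+ 2)) => // j _; exact: sqr_ge0.
have -> : P = 0 by rewrite /P big1 // => i _; rewrite a0 mul0r.
by rewrite A0 mul0r expr2 mul0r.
Qed.

Section Modulus.
Variable R : rcfType.
Implicit Types (z : R[i]) (a : R).

Lemma norm_normc z : `|z| = (normc z)%:C.
Proof. by case: z => a b; rewrite normc_def. Qed.

Lemma normc_ge0 z : 0 <= normc z.
Proof. by case: z => a b; exact: sqrtr_ge0. Qed.

Lemma normc_conj z : normc z^*%C = normc z.
Proof. by apply: complexI; rewrite -!norm_normc normcJ. Qed.

Lemma normc_real a : normc a%:C = `|a|.
Proof. by rewrite /normc /= expr0n /= addr0 sqrtr_sqr. Qed.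

Lemma normc_sqr_conj z : (normc z ^+ 2)%:C = z * z^*%C.
Proof. by rewrite -sqr_normc norm_normc rmorphXn. Qed.

Lemma normc_eq0 z : (normc z == 0) = (z == 0).
Proof. by rewrite -(inj_eq (@complexI _)) -norm_normc normr_eq0. Qed.

Lemma ler_normc_sum (I : finType) (F : I -> R[i]) :
  normc (\sum_i F i) <= \sum_i normc (F i).
Proof.
rewrite -lecR -norm_normc (le_trans (ler_norm_sum _ _ _)) // rmorph_sum.
by apply: ler_sum => i _; rewrite norm_normc.
Qed.

Lemma Re_le_normc z : complex.Re z <= normc z.
Proof.
by apply: le_trans (ler_norm _) _; rewrite -lecR -norm_normc normc_ge_Re.
Qed.

(* phase 0 = 1 keeps |phase z| = 1 for every z. *)
Definition phase z : R[i] := if z == 0 then 1 else z / (normc z)%:C.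

Lemma phaseK z : phase z * (normc z)%:C = z.
Proof.
rewrite /phase; have [->|z_neq0] := eqVneq z 0; first by rewrite normc0 mul1r.
by rewrite divfK // -norm_normc normr_eq0.
Qed.

Lemma normc_phase z : normc (phase z) = 1.
Proof.
rewrite /phase; have [_|z_neq0] := eqVneq z 0; first by rewrite normc_real normr1.
have nz_gt0 : 0 < normc z by rewrite lt0r normc_eq0 z_neq0 normc_ge0.
rewrite normcM -fmorphV normc_real ger0_norm ?invr_ge0 ?ltW //.
by rewrite mulfV // gt_eqF.
Qed.

Lemma phase_conj z : phase z * (phase z)^*%C = 1.
Proof. by rewrite -normc_sqr_conj normc_phase expr1n. Qed.

End Modulus.

Section InnerProduct.
Variables (R : rcfType) (n : nat).
Implicit Types (x y u w h : 'cV[R[i]]_n) (c : R[i]) (rho t : R).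

Definition dot x y : R[i] := \sum_i (x i 0)^*%C * y i 0.
Definition sqnorm x : R := \sum_i normc (x i 0) ^+ 2.
Definition vnorm x : R := Num.sqrt (sqnorm x).

Lemma sqnorm_ge0 x : 0 <= sqnorm x.
Proof. by apply: sumr_ge0 => i _; exact: sqr_ge0. Qed.

Lemma vnorm_ge0 x : 0 <= vnorm x.
Proof. exact: sqrtr_ge0. Qed.

Lemma sqr_vnorm x : vnorm x ^+ 2 = sqnorm x.
Proof. by rewrite sqr_sqrtr ?sqnorm_ge0. Qed.

Lemma dotC x y : dot y x = (dot x y)^*%C.
Proof.
by rewrite /dot rmorph_sum; apply: eq_bigr => i _; rewrite rmorphM /= conjcK mulrC.
Qed.

Lemma dotxx x : dot x x = (sqnorm x)%:C.
Proof.
rewrite /dot /sqnorm rmorph_sum /=; apply: eq_bigr => i _.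
by rewrite normc_sqr_conj mulrC.
Qed.

Lemma dotDl x y w : dot (x + y) w = dot x w + dot y w.
Proof. by rewrite /dot -big_split; apply: eq_bigr => i _; rewrite mxE rmorphD mulrDl. Qed.

Lemma dotDr x y w : dot x (y + w) = dot x y + dot x w.
Proof. by rewrite /dot -big_split; apply: eq_bigr => i _; rewrite mxE mulrDr. Qed.

Lemma dotZl c x y : dot (c *: x) y = c^*%C * dot x y.
Proof. by rewrite /dot mulr_sumr; apply: eq_bigr => i _; rewrite mxE rmorphM mulrA. Qed.

Lemma dotZr c x y : dot x (c *: y) = c * dot x y.
Proof. by rewrite /dot mulr_sumr; apply: eq_bigr => i _; rewrite mxE mulrCA. Qed.

Lemma sqnormZ c x : sqnorm (c *: x) = normc c ^+ 2 * sqnorm x.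
Proof.
by rewrite /sqnorm mulr_sumr; apply: eq_bigr => i _; rewrite mxE normcM exprMn.
Qed.

Lemma vnormZ c x : vnorm (c *: x) = normc c * vnorm x.
Proof.
by rewrite /vnorm sqnormZ sqrtrM ?sqr_ge0 // sqrtr_sqr ger0_norm ?normc_ge0.
Qed.

Lemma sqnormD x y : sqnorm (x + y) = sqnorm x + sqnorm y + 2 * complex.Re (dot x y).
Proof.
apply: complexI; rewrite !rmorphD rmorphM /= -!dotxx dotDl !dotDr (dotC x y).
by rewrite (rmorph_nat (real_complex R) 2) -addcJ; ring.
Qed.

Lemma vnorm_CauchySchwarz x y : normc (dot x y) <= vnorm x * vnorm y.
Proof.
apply: le_trans (ler_normc_sum _) _.
under eq_bigr do rewrite normcM normc_conj.
rewrite /vnorm -sqrtrM ?sqnorm_ge0 //.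
have sum_ge0 : 0 <= \sum_i normc (x i 0) * normc (y i 0).
  by apply: sumr_ge0 => i _; rewrite mulr_ge0 ?normc_ge0.
by rewrite -(ger0_norm sum_ge0) -sqrtr_sqr ler_wsqrtr // sum_CauchySchwarz.
Qed.

Lemma vnormD x y : vnorm (x + y) <= vnorm x + vnorm y.
Proof.
rewrite -(ger0_norm (addr_ge0 (vnorm_ge0 x) (vnorm_ge0 y))) -sqrtr_sqr.
rewrite ler_wsqrtr // sqnormD sqrrD !sqr_vnorm mulr2n.
have := le_trans (Re_le_normc (dot x y)) (vnorm_CauchySchwarz x y); lra.
Qed.

Definition worst_amp h0 (rho : R) u : R := normc (dot h0 u) + rho * vnorm u.

Lemma worst_amp_ge0 h0 rho u : 0 <= rho -> 0 <= worst_amp h0 rho u.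
Proof. by move=> rho_ge0; rewrite addr_ge0 ?mulr_ge0 ?normc_ge0 ?vnorm_ge0. Qed.

Lemma ler_dot_ball h0 rho h u : 0 <= rho -> sqnorm (h - h0) <= rho ^+ 2 ->
  normc (dot h u) <= worst_amp h0 rho u.
Proof.
move=> rho_ge0 h_in; rewrite -(subrK h0 h) dotDl addrC /worst_amp.
apply: le_trans (le_normcD _ _) _; rewrite lerD2l.
apply: le_trans (vnorm_CauchySchwarz _ _) _; rewrite ler_wpM2r ?vnorm_ge0 //.
by rewrite /vnorm -(ger0_norm rho_ge0) -sqrtr_sqr ler_wsqrtr.
Qed.

Lemma exists_dot_ball_max h0 rho u : 0 <= rho -> exists2 h,
  sqnorm (h - h0) <= rho ^+ 2 & normc (dot h u) = worst_amp h0 rho u.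
Proof.
move=> rho_ge0; set a := dot h0 u; rewrite /worst_amp -/a.
have [u0|u_neq0] := eqVneq (vnorm u) 0.
  exists h0; last by rewrite u0 mulr0 addr0.
  rewrite subrr /sqnorm big1 ?sqr_ge0 // => i _.
  by rewrite mxE normc0 expr0n.
have rho_vnorm : rho / vnorm u * vnorm u ^+ 2 = rho * vnorm u.
  by rewrite expr2 mulrA divfK.
(* move from h0 by rho along u, rotated to be in phase with <h0, u> *)
set c := (phase a)^*%C * (rho / vnorm u)%:C.
exists (h0 + c *: u).
  rewrite addrAC subrr add0r sqnormZ normcM normc_conj normc_phase mul1r.
  rewrite normc_real ger0_norm ?divr_ge0 ?vnorm_ge0 // -sqr_vnorm -exprMn.
  by rewrite divfK.
have -> : dot (h0 + c *: u) u = phase a * (normc a + rho * vnorm u)%:C.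
  rewrite dotDl dotZl -/a.
  have -> : c^*%C = phase a * (rho / vnorm u)%:C.
    by rewrite /c rmorphM /= conjcK; congr (_ * _); exact: conjc_real.
  rewrite dotxx -sqr_vnorm -rho_vnorm.
  by rewrite -{1}(phaseK a) !rmorphD !rmorphM /=; ring.
rewrite normcM normc_phase mul1r normc_real ger0_norm //.
by rewrite addr_ge0 ?mulr_ge0 ?normc_ge0 ?vnorm_ge0.
Qed.

Lemma exists_aligned_mix hs u w t : 0 <= t <= 1 -> exists z,
  [/\ normc (dot hs z) = (1 - t) * normc (dot hs u) + t * normc (dot hs w),
      forall h, normc (dot h z) <= (1 - t) * normc (dot h u) + t * normc (dot h w)
    & vnorm z <= (1 - t) * vnorm u + t * vnorm w].
Proof.
case/andP => t_ge0 t_le1; have t'_ge0 : 0 <= 1 - t by rewrite subr_ge0.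
set a := dot hs u; set b := dot hs w.
(* rotating w by zeta puts <hs, zeta w> in phase with <hs, u> *)
set zeta := phase a * (phase b)^*%C.
have zeta_b : zeta * b = phase a * (normc b)%:C.
  rewrite /zeta -{2}(phaseK b) -!mulrA (mulrA _ (phase b)) [_^* * _]mulrC.
  by rewrite phase_conj mul1r.
exists ((1 - t)%:C *: u + (t%:C * zeta) *: w); split.
- rewrite dotDr !dotZr -/a -/b -mulrA zeta_b.
  have -> : (1 - t)%:C * a + t%:C * (phase a * (normc b)%:C) =
            phase a * ((1 - t) * normc a + t * normc b)%:C.
    by rewrite -{1}(phaseK a) !rmorphD !rmorphM /=; ring.
  rewrite normcM normc_phase mul1r normc_real ger0_norm //.
  by rewrite addr_ge0 ?mulr_ge0 ?normc_ge0.
- move=> h; rewrite dotDr !dotZr; apply: le_trans (le_normcD _ _) _.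
  by rewrite !normcM normc_conj !normc_phase !mulr1 !normc_real !ger0_norm.
- apply: le_trans (vnormD _ _) _.
  by rewrite !vnormZ !normcM normc_conj !normc_phase !mulr1 !normc_real !ger0_norm.
Qed.

End InnerProduct.

Lemma exists_convex_step (R : realFieldType) (m s k m' s' k' : R) :
  0 <= m -> m < s -> 0 <= k -> m' <= s' -> k' <= s' -> exists2 t, 0 < t <= 1 &
    (1 - t) * m + t * k <= s /\ (1 - t) * m' + t * k' <= s'.
Proof.
move=> m_ge0 m_lt_s k_ge0 m'_le k'_le; have ks_gt0 : 0 < k + s by lra.
set t := (s - m) / (k + s).
have tE : t * (k + s) = s - m by rewrite divfK // gt_eqF.
have t_gt0 : 0 < t by rewrite divr_gt0 // subr_gt0.
have t_le1 : t <= 1 by rewrite ler_pdivrMr // mul1r; lra.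
by exists t; [rewrite t_gt0 t_le1 | split; nra].
Qed.

Lemma exists_better_mix (R : rcfType) (n : nat) (hs h0 u w : 'cV[R[i]]_n) (rho A B : R) :
    0 <= rho -> normc (dot hs u) < normc (dot hs w) ->
    vnorm u <= A -> worst_amp h0 rho u <= B ->
    (vnorm u < A /\ worst_amp h0 rho w <= B) \/ (worst_amp h0 rho u < B /\ vnorm w <= A) ->
  exists z, [/\ vnorm z <= A, worst_amp h0 rho z <= B & normc (dot hs u) < normc (dot hs z)].
Proof.
move=> rho_ge0 lt_uw u_le_A u_le_B slack.
have [t /andP[t_gt0 t_le1] [t_A t_B]] : exists2 t : R, 0 < t <= 1 &
    (1 - t) * vnorm u + t * vnorm w <= A /\
    (1 - t) * worst_amp h0 rho u + t * worst_amp h0 rho w <= B.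
  have [amp_u_ge0 amp_w_ge0] := (worst_amp_ge0 h0 u rho_ge0, worst_amp_ge0 h0 w rho_ge0).
  case: slack => [[u_lt_A w_le_B] | [u_lt_B w_le_A]].
    exact: exists_convex_step (vnorm_ge0 u) u_lt_A (vnorm_ge0 w) u_le_B w_le_B.
  have [t t01 [t_B t_A]] := exists_convex_step amp_u_ge0 u_lt_B amp_w_ge0 u_le_A w_le_A.
  by exists t.
have t01 : 0 <= t <= 1 by rewrite (ltW t_gt0) t_le1.
have [z [dot_hs_z dot_z vnorm_z]] := exists_aligned_mix hs u w t01.
exists z; split.
- exact: le_trans vnorm_z t_A.
- apply: le_trans t_B; rewrite /worst_amp.
  have := ler_wpM2l rho_ge0 vnorm_z; have := dot_z h0; nra.
- have : 0 < t * (normc (dot hs w) - normc (dot hs u)) by rewrite mulr_gt0 ?subr_gt0.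
  by rewrite dot_hs_z; lra.
Qed.

Section Optimality.
Variables (R : realType) (N : nat).
Implicit Types (F G : 'M[R[i]]_N -> Prop) (hs : 'cV[R[i]]_N) (S : 'M[R[i]]_N).

Lemma the_optimal_sub F G hs S :
  (forall S, F S -> G S) -> the_optimal G hs S -> F S -> the_optimal F hs S.
Proof.
move=> FG [[GS optS] uniqS] FS; split; first by split => // S' /FG; exact: optS.
move=> S' [FS' optS']; apply: uniqS; split; first exact: FG.
by move=> S'' /optS /le_trans; apply; exact: optS'.
Qed.

Lemma the_optimal_unique F hs S0 S :
  the_optimal F hs S0 -> F S -> objective hs S0 <= objective hs S -> S = S0.
Proof.
move=> [[_ optS0] uniqS0] FS le_S0S; apply: uniqS0; split => // S' /optS0.
by move/le_trans; apply.
Qed.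

End Optimality.

Section RankOne.
Variables (R : realType) (N : nat).
Implicit Types (x y u w h v : 'cV[R[i]]_N) (c : R[i]) (S : 'M[R[i]]_N) (p : R).

Definition outer u : 'M[R[i]]_N := u *m ctmx u.

Lemma ctmx_mulmx00 x y : (ctmx x *m y) 0 0 = dot x y.
Proof. by rewrite !mxE; apply: eq_bigr => i _; rewrite !mxE. Qed.

Lemma vnorm2E x : vnorm2 x = (sqnorm x)%:C.
Proof.
rewrite /vnorm2 /sqnorm rmorph_sum /=; apply: eq_bigr => i _.
by rewrite norm_normc rmorphXn.
Qed.

Lemma qform_outer h u : qform h (outer u) = (normc (dot h u) ^+ 2)%:C.
Proof.
rewrite /qform /outer mulmxA -mulmxA mxE big_ord1 ctmx_mulmx00.
by rewrite ctmx_mulmx00 (dotC h u) normc_sqr_conj.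
Qed.

Lemma mxtrace_outer u : \tr (outer u) = (sqnorm u)%:C.
Proof.
rewrite /mxtrace /sqnorm rmorph_sum /=; apply: eq_bigr => i _.
by rewrite mxE big_ord1 !mxE normc_sqr_conj.
Qed.

Lemma outerZ c u : outer (c *: u) = (c * c^*%C) *: outer u.
Proof.
have ctmxZ : ctmx (c *: u) = c^*%C *: ctmx u.
  by apply/matrixP => i j; rewrite !mxE rmorphM.
by rewrite /outer ctmxZ -scalemxAl -scalemxAr scalerA.
Qed.

Lemma pvv_outer S p v : is_pvv S p v ->
  S = outer ((Num.sqrt p)%:C *: v) /\ sqnorm ((Num.sqrt p)%:C *: v) = p.
Proof.
case=> p_ge0 [v_unit ->]; have v1 : sqnorm v = 1.
  by apply: complexI; rewrite -vnorm2E v_unit.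
split; last by rewrite sqnormZ v1 mulr1 normc_real ger0_norm ?sqrtr_ge0 // sqr_sqrtr.
by rewrite outerZ conjc_real -rmorphM -expr2 sqr_sqrtr.
Qed.

Lemma mxtrace_pvv S p v : is_pvv S p v -> \tr S = p%:C.
Proof. by case/pvv_outer => -> p_E; rewrite mxtrace_outer p_E. Qed.

Lemma outer_pvv u : 0 < sqnorm u -> is_pvv (outer u) (sqnorm u) ((vnorm u)^-1%:C *: u).
Proof.
move=> u_gt0; have vnorm_neq0 : vnorm u != 0 by rewrite gt_eqF ?sqrtr_gt0.
split; first exact: ltW.
split.
  rewrite vnorm2E sqnormZ normc_real ger0_norm ?invr_ge0 ?vnorm_ge0 //.
  by rewrite -sqr_vnorm -exprMn mulVf ?expr1n.
rewrite -[_ *m ctmx _]/(outer _) outerZ conjc_real -rmorphM scalerA -rmorphM.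
rewrite -sqr_vnorm -expr2 -exprMn.
by rewrite mulfV ?expr1n ?scale1r.
Qed.

Lemma objective_outer_le hs u w :
  (objective hs (outer u) <= objective hs (outer w)) =
  (normc (dot hs u) <= normc (dot hs w)).
Proof.
rewrite /objective !qform_outer /= ler_ln ?posrE ?ltr_wpDr ?sqr_ge0 // lerD2l.
by rewrite ler_sqr ?nnegrE ?normc_ge0.
Qed.

End RankOne.

Section MeanFeedback.
Variables (R : realType) (N : nat) (hs h0 : 'cV[R[i]]_N) (eps sigma Pbar Pt : R).
Hypotheses (radius_ge0 : 0 <= eps * sigma ^+ 2) (Pbar_ge0 : 0 <= Pbar) (Pt_ge0 : 0 <= Pt).
Implicit Types (u z h : 'cV[R[i]]_N) (S : 'M[R[i]]_N).

Local Notation rho := (Num.sqrt (eps * sigma ^+ 2)).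
Local Notation amp := (worst_amp h0 rho).
Local Notation feas := (feas_P3 h0 eps sigma Pbar Pt).

Lemma in_ballE h : in_ball h0 eps sigma h = (sqnorm (h - h0) <= rho ^+ 2).
Proof. by rewrite /in_ball vnorm2E lecR sqr_sqrtr. Qed.

Lemma interf_ok_outerE u : interf_ok h0 eps sigma Pt (outer u) <-> amp u <= Num.sqrt Pt.
Proof.
have amp_ge0 := worst_amp_ge0 h0 u (sqrtr_ge0 (eps * sigma ^+ 2)).
rewrite -(ger0_norm amp_ge0) -sqrtr_sqr ler_sqrt //.
split => [ok | amp_le h h_in].
  have [h h_in <-] := exists_dot_ball_max h0 u (sqrtr_ge0 (eps * sigma ^+ 2)).
  by rewrite -lecR -qform_outer; apply: ok; rewrite in_ballE.
rewrite qform_outer lecR; apply: le_trans amp_le.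
rewrite ler_sqr ?nnegrE ?normc_ge0 //.
by apply: ler_dot_ball; rewrite ?sqrtr_ge0 -?in_ballE.
Qed.

Lemma exists_worst_direction u : exists hopt,
  [/\ in_ball h0 eps sigma hopt,
      forall h, in_ball h0 eps sigma h -> qform h (outer u) <= qform hopt (outer u)
    & qform hopt (outer u) = (amp u ^+ 2)%:C].
Proof.
have rho_ge0 := sqrtr_ge0 (eps * sigma ^+ 2).
have [hopt hopt_in hoptE] := exists_dot_ball_max h0 u rho_ge0.
exists hopt; split; first by rewrite in_ballE.
  move=> h h_in; rewrite !qform_outer lecR hoptE ler_sqr ?nnegrE ?normc_ge0 //.
    by apply: ler_dot_ball; rewrite -?in_ballE.
  exact: worst_amp_ge0.
by rewrite qform_outer hoptE.
Qed.

Lemma feas_SP1_outer S : feas_SP1 Pbar S -> exists2 u, S = outer u & vnorm u <= Num.sqrt Pbar.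
Proof.
by case=> p [v [/pvv_outer[-> p_E] p_le]]; eexists; rewrite // /vnorm p_E ler_sqrt.
Qed.

Lemma feas_SP2_outer S :
  feas_SP2 h0 eps sigma Pt S -> exists2 u, S = outer u & amp u <= Num.sqrt Pt.
Proof.
case=> p [v [/pvv_outer[S_E _] ok]]; exists ((Num.sqrt p)%:C *: v) => //.
by apply/interf_ok_outerE; rewrite -S_E.
Qed.

Lemma feas_P3_outer u : feas (outer u) -> vnorm u <= Num.sqrt Pbar /\ amp u <= Num.sqrt Pt.
Proof.
case=> p [v [pv [p_le ok]]]; split; last exact/interf_ok_outerE.
have sqnorm_u : sqnorm u = p.
  by apply: complexI; rewrite -mxtrace_outer (mxtrace_pvv pv).
by rewrite /vnorm sqnorm_u ler_sqrt.
Qed.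

Lemma outer_feas_P3 z :
  0 < sqnorm z -> vnorm z <= Num.sqrt Pbar -> amp z <= Num.sqrt Pt -> feas (outer z).
Proof.
move=> z_gt0 z_le amp_le; exists (sqnorm z), ((vnorm z)^-1%:C *: z).
split; first exact: outer_pvv.
by split; [rewrite -(ler_sqrt _ Pbar_ge0) | exact/interf_ok_outerE].
Qed.

Lemma optimal_P3_ge u z : optimal feas hs (outer u) ->
  vnorm z <= Num.sqrt Pbar -> amp z <= Num.sqrt Pt -> normc (dot hs z) <= normc (dot hs u).
Proof.
move=> [_ opt_u] z_le amp_le; have [z0|z_neq0] := eqVneq (sqnorm z) 0.
  have := vnorm_CauchySchwarz hs z; rewrite /vnorm z0 sqrtr0 mulr0.
  by move/le_trans; apply; exact: normc_ge0.
rewrite -objective_outer_le; apply: opt_u; apply: outer_feas_P3 => //.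
by rewrite lt0r z_neq0 sqnorm_ge0.
Qed.

Lemma optimal_P3_active S1 S2 u :
    the_optimal (feas_SP1 Pbar) hs S1 -> the_optimal (feas_SP2 h0 eps sigma Pt) hs S2 ->
    ~ interf_ok h0 eps sigma Pt S1 -> ~ (\tr S2 <= Pbar%:C) ->
    optimal feas hs (outer u) ->
  vnorm u = Num.sqrt Pbar /\ amp u = Num.sqrt Pt.
Proof.
move=> opt1 opt2 not_ok1 not_tr2 opt_u.
have [p [v [pv [p_le ok]]]] := opt_u.1.
have [u_le_Pbar u_le_Pt] := feas_P3_outer opt_u.1.
have [u1 S1E u1_le] := feas_SP1_outer opt1.1.1.
have [u2 S2E u2_le] := feas_SP2_outer opt2.1.1.
have lt1 : normc (dot hs u) < normc (dot hs u1).
  rewrite ltNge; apply/negP => le1; apply: not_ok1.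
  suff <- : outer u = S1 by [].
  by apply: the_optimal_unique opt1 _ _; [exists p, v | rewrite S1E objective_outer_le].
have lt2 : normc (dot hs u) < normc (dot hs u2).
  rewrite ltNge; apply/negP => le2; apply: not_tr2.
  suff <- : outer u = S2 by rewrite mxtrace_outer lecR -(ler_sqrt _ Pbar_ge0).
  by apply: the_optimal_unique opt2 _ _; [exists p, v | rewrite S2E objective_outer_le].
have rho_ge0 := sqrtr_ge0 (eps * sigma ^+ 2).
split; apply/eqP; rewrite eq_le ?u_le_Pbar ?u_le_Pt /= leNgt; apply/negP => slack.
- have [z [z_le amp_z_le lt_z]] :=
    exists_better_mix rho_ge0 lt2 u_le_Pbar u_le_Pt (or_introl (conj slack u2_le)).
  by have := optimal_P3_ge opt_u z_le amp_z_le; rewrite leNgt lt_z.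
- have [z [z_le amp_z_le lt_z]] :=
    exists_better_mix rho_ge0 lt1 u_le_Pbar u_le_Pt (or_intror (conj slack u1_le)).
  by have := optimal_P3_ge opt_u z_le amp_z_le; rewrite leNgt lt_z.
Qed.

End MeanFeedback.

Theorem lemma5 (R : realType) (N : nat) (hN : (1 <= N)%N)
    (hs h0 : 'cV[R[i]]_N) (sigma eps Pbar Pt : R)
    (hsigma : 0 < sigma) (heps : 0 < eps) (hPbar : 0 < Pbar) (hPt : 0 < Pt)
    (S1 S2 : 'M[R[i]]_N)
    (hS1 : the_optimal (feas_SP1 Pbar) hs S1)
    (hS2 : the_optimal (feas_SP2 h0 eps sigma Pt) hs S2) :
  (* (i) *)
  (interf_ok h0 eps sigma Pt S1 ->
     the_optimal (feas_P3 h0 eps sigma Pbar Pt) hs S1) /\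
  (* (ii) *)
  (\tr S2 <= Pbar%:C ->
     the_optimal (feas_P3 h0 eps sigma Pbar Pt) hs S2) /\
  (* (iii) *)
  (~ interf_ok h0 eps sigma Pt S1 -> ~ (\tr S2 <= Pbar%:C) ->
     forall S, optimal (feas_P3 h0 eps sigma Pbar Pt) hs S ->
       \tr S = Pbar%:C /\
       exists hopt, in_ball h0 eps sigma hopt /\
         (forall h, in_ball h0 eps sigma h -> qform h S <= qform hopt S) /\
         qform hopt S = Pt%:C).
Proof.
have radius_ge0 : 0 <= eps * sigma ^+ 2 by rewrite mulr_ge0 ?sqr_ge0 ?ltW.
split; [|split].
- move=> ok1; case: (hS1) => [[[p [v [pv p_le]]] _] _].
  apply: (the_optimal_sub _ hS1); last by exists p, v.
  by move=> S [p' [v' [pv' [p'_le _]]]]; exists p', v'.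
- move=> tr2; case: (hS2) => [[[p [v [pv ok]]] _] _].
  apply: (the_optimal_sub _ hS2).
    by move=> S [p' [v' [pv' [_ ok']]]]; exists p', v'.
  by exists p, v; move: tr2; rewrite (mxtrace_pvv pv) lecR.
move=> not_ok1 not_tr2 S opt; case: (opt) => [[p [v [/pvv_outer[S_E _] _]]] _].
move: opt; rewrite {}S_E; set u := (_ *: v) => opt.
have [vnorm_u amp_u] :=
  optimal_P3_active radius_ge0 (ltW hPbar) (ltW hPt) hS1 hS2 not_ok1 not_tr2 opt.
split; first by rewrite mxtrace_outer -sqr_vnorm vnorm_u (sqr_sqrtr (ltW hPbar)).
have [hopt [hopt_in hopt_max hoptE]] := exists_worst_direction h0 radius_ge0 u.
by exists hopt; do !split => //; rewrite hoptE amp_u (sqr_sqrtr (ltW hPt)).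
Qed.
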